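(* Let $A=(A_1,A_2)\in V_2$ satisfy $\sigma_{12}(A)\neq 0$. Then $A$ is similar to a pair $B=(B_1,B_2)$ with $B_1^T=B_1$ and $B_2^T=B_2$.
   Context: $V_2=(M_{2\times2}(\mathbb{C}))^{\times 2}$ with $GL(2,\mathbb{C})$ acting by simultaneous conjugation; similar means same orbit. With $t_j=\mathsf{tr}(A_j)$, $t_{jk}=\mathsf{tr}(A_jA_k)$, $\tau_{jk}=t_{jk}-\tfrac12t_jt_k$ and $\sigma_{12}=\tau_{12}^2-\tau_{11}\tau_{22}$. $T$ denotes transposition. *)

From mathcomp Require Import all_boot all_algebra.
Set Implicit Arguments. Unset Strict Implicit. Unset Printing Implicit Defensive.
Import GRing.Theory Num.Theory.
Local Open Scope ring_scope.

Definition tau2 (C : numClosedFieldType) (X Y : 'M[C]_2) : C :=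
  \tr (X *m Y) - 2^-1 * (\tr X * \tr Y).

Definition sigma12 (C : numClosedFieldType) (A1 A2 : 'M[C]_2) : C :=
  tau2 A1 A2 ^+ 2 - tau2 A1 A1 * tau2 A2 A2.

Definition similar_pair (C : numClosedFieldType) (A1 A2 B1 B2 : 'M[C]_2) : Prop :=
  exists P : 'M[C]_2, P \in unitmx /\
    B1 = P *m A1 *m invmx P /\ B2 = P *m A2 *m invmx P.

From mathcomp Require Import all_boot all_algebra.
From mathcomp Require Import ring.
Set Implicit Arguments. Unset Strict Implicit. Unset Printing Implicit Defensive.
Import GRing.Theory Num.Theory.
Local Open Scope ring_scope.

(* Let J = [[0, 1], [-1, 0]]. For a 2x2 matrix M, M J is symmetric exactly when
   tr M = 0, so S := [A1, A2] J and both A_i S are symmetric, the traces of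
   [A1, A2] and of A_i [A1, A2] being zero. Moreover det S = det [A1, A2]
   = -sigma12, so S is a nondegenerate symmetric form and, the field being
   algebraically closed, S = Q Q^T with Q invertible. Then
   Q^-1 A_i Q = Q^-1 (A_i S) Q^-T is symmetric for both i. *)

Lemma sum_ord2 (V : nmodType) (F : 'I_2 -> V) : \sum_(i < 2) F i = F ord0 + F ord_max.
Proof. by rewrite big_ord_recl big_ord1; congr (_ + F _); apply: val_inj. Qed.

Definition mx22 (R : Type) (a b c d : R) : 'M[R]_2 :=
  \matrix_(i, j) if i == ord0 then (if j == ord0 then a else b)
                 else (if j == ord0 then c else d).

Lemma mx22_eta (R : Type) (A : 'M[R]_2) :
  A = mx22 (A ord0 ord0) (A ord0 ord_max) (A ord_max ord0) (A ord_max ord_max).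
Proof.
apply/matrixP => -[[|[|//]] i] [[|[|//]] j]; rewrite mxE /=;
  by congr (A _ _); apply: val_inj.
Qed.

Lemma tr_mx22 (R : Type) (a b c d : R) : (mx22 a b c d)^T = mx22 a c b d.
Proof. by apply/matrixP => -[[|[|//]] i] [[|[|//]] j]; rewrite !mxE. Qed.

Lemma sym_mx22 (R : Type) (S : 'M[R]_2) :
  S^T = S -> S = mx22 (S ord0 ord0) (S ord0 ord_max) (S ord0 ord_max) (S ord_max ord_max).
Proof.
move=> S_sym; have S10 : S ord_max ord0 = S ord0 ord_max by rewrite -[in LHS]S_sym mxE.
by rewrite [LHS]mx22_eta S10.
Qed.

Section Mx22Ring.
Variable R : pzRingType.
Implicit Types a b c d : R.

Lemma add_mx22 a b c d a' b' c' d' :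
  mx22 a b c d + mx22 a' b' c' d' = mx22 (a + a') (b + b') (c + c') (d + d').
Proof. by apply/matrixP => -[[|[|//]] i] [[|[|//]] j]; rewrite !mxE. Qed.

Lemma opp_mx22 a b c d : - mx22 a b c d = mx22 (- a) (- b) (- c) (- d).
Proof. by apply/matrixP => -[[|[|//]] i] [[|[|//]] j]; rewrite !mxE. Qed.

Lemma mul_mx22 a b c d a' b' c' d' :
  mx22 a b c d *m mx22 a' b' c' d' =
  mx22 (a * a' + b * c') (a * b' + b * d') (c * a' + d * c') (c * b' + d * d').
Proof.
by apply/matrixP => -[[|[|//]] i] [[|[|//]] j]; rewrite !mxE sum_ord2 !mxE.
Qed.

Lemma mxtrace_mx22 a b c d : \tr (mx22 a b c d) = a + d.
Proof. by rewrite /mxtrace sum_ord2 !mxE. Qed.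

End Mx22Ring.

Lemma det_mx22 (R : comPzRingType) (a b c d : R) : \det (mx22 a b c d) = a * d - b * c.
Proof.
by rewrite (expand_det_row _ ord0) sum_ord2 /cofactor !det_mx11 !mxE /=; ring.
Qed.

Section Commutator.
Variables (R : comPzRingType) (n : nat).
Implicit Types A B : 'M[R]_n.

Lemma mxtrace_commutator A B : \tr (A *m B - B *m A) = 0.
Proof. by rewrite raddfB /= mxtrace_mulC subrr. Qed.

Lemma mxtrace_mul_commutator A B : \tr (A *m (A *m B - B *m A)) = 0.
Proof. by rewrite mulmxBr raddfB /= {1}mxtrace_mulC -mulmxA subrr. Qed.

End Commutator.

Definition mxJ (R : pzRingType) : 'M[R]_2 := mx22 0 1 (-1) 0.

Lemma det_mxJ (R : comPzRingType) : \det (mxJ R) = 1.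
Proof. by rewrite det_mx22; ring. Qed.

Lemma trmx_mulmxJ (R : comPzRingType) (M : 'M[R]_2) :
  \tr M = 0 -> (M *m mxJ R)^T = M *m mxJ R.
Proof.
rewrite [M]mx22_eta mxtrace_mx22 => /eqP; rewrite addr_eq0 => /eqP ->.
by rewrite mul_mx22 tr_mx22; congr mx22; ring.
Qed.

Lemma det_commutator_mx22 (C : numClosedFieldType) (A B : 'M[C]_2) :
  \det (A *m B - B *m A) = - sigma12 A B.
Proof.
have two_neq0 : (2 : C) != 0 by rewrite pnatr_eq0.
rewrite /sigma12 /tau2 [A]mx22_eta [B]mx22_eta !mul_mx22 opp_mx22 add_mx22.
by rewrite det_mx22 !mxtrace_mx22; field.
Qed.

Lemma trmx_conjugate_factor (R : comUnitRingType) (n : nat) (Q X : 'M[R]_n) :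
    Q \in unitmx -> (X *m (Q *m Q^T))^T = X *m (Q *m Q^T) ->
  (invmx Q *m X *m Q)^T = invmx Q *m X *m Q.
Proof.
move=> Qu XS_sym.
have -> : invmx Q *m X *m Q = invmx Q *m (X *m (Q *m Q^T)) *m (invmx Q)^T.
  by rewrite trmx_inv !mulmxA mulmxK ?unitmx_tr.
by rewrite trmx_mul [(_ *m (X *m _))^T]trmx_mul XS_sym trmxK mulmxA.
Qed.

Lemma closed_sqrt (F : closedFieldType) (a : F) : exists r : F, r ^+ 2 = a.
Proof.
have [r r2] := @solve_monicpoly F 2 (nth 0 [:: a]) isT.
by exists r; rewrite r2 !big_ord_recl big_ord0 /= mulr1 mul0r !addr0.
Qed.

Lemma sym_mx22_pivot (R : idomainType) (S : 'M[R]_2) :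
    (2 : R) != 0 -> S^T = S -> \det S != 0 ->
  exists2 P, P \in unitmx & (P *m S *m P^T) ord0 ord0 != 0.
Proof.
move=> two_neq0 /sym_mx22 ->; set a := S _ _; set b := S _ _; set d := S _ _.
rewrite det_mx22 => detS.
have [a0 | a_neq0] := eqVneq a 0; last first.
  by exists 1; rewrite ?unitmx1 // trmx1 mul1mx mulmx1 mxE.
have [d0 | d_neq0] := eqVneq d 0.
  exists (mx22 1 1 0 1); first by rewrite unitmxE det_mx22 mulr1 mulr0 subr0 unitr1.
  rewrite tr_mx22 !mul_mx22 mxE /= a0 d0 !(mul0r, mul1r, mulr1, add0r, addr0).
  rewrite -mulr2n -mulr_natl mulf_neq0 //.
  by apply: contraNneq detS => ->; rewrite a0 d0 !mul0r subrr.
exists (mx22 0 1 1 0); first by rewrite unitmxE det_mx22 mul0r mulr1 sub0r unitrN unitr1.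
by rewrite tr_mx22 !mul_mx22 mxE /= !(mul0r, mul1r, mulr0, mulr1, add0r, addr0).
Qed.

Lemma sym_mx22_cholesky (F : closedFieldType) (S : 'M[F]_2) :
    S^T = S -> S ord0 ord0 != 0 -> \det S != 0 ->
  exists2 L, L \in unitmx & S = L *m L^T.
Proof.
move=> /sym_mx22 ->; set a := S _ _; set b := S _ _; set d := S _ _.
rewrite mxE /= det_mx22 => a_neq0 detS.
have [r r2] := closed_sqrt a.
have [s s2] := closed_sqrt ((a * d - b * b) / a).
have r_neq0 : r != 0 by move: a_neq0; rewrite -r2 expf_eq0.
have s_neq0 : s != 0 by move: (mulf_neq0 detS (invr_neq0 a_neq0)); rewrite -s2 expf_eq0.
exists (mx22 r 0 (b / r) s).
  by rewrite unitmxE det_mx22 mul0r subr0 unitfE mulf_neq0.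
by rewrite tr_mx22 mul_mx22; congr mx22; rewrite -?expr2 ?s2 -?r2; field.
Qed.

Lemma sym_mx22_factor (F : closedFieldType) (S : 'M[F]_2) :
    (2 : F) != 0 -> S^T = S -> \det S != 0 ->
  exists2 Q, Q \in unitmx & S = Q *m Q^T.
Proof.
move=> two_neq0 S_sym detS.
have [P Pu pivot] := sym_mx22_pivot two_neq0 S_sym detS.
have PS_sym : (P *m S *m P^T)^T = P *m S *m P^T by rewrite !trmx_mul trmxK S_sym mulmxA.
have detPS : \det (P *m S *m P^T) != 0.
  by rewrite !det_mulmx det_tr !mulf_neq0 // -unitfE -unitmxE.
have [L Lu PS_LL] := sym_mx22_cholesky PS_sym pivot detPS.
exists (invmx P *m L); first by rewrite unitmx_mul unitmx_inv Pu.
rewrite trmx_mul !mulmxA -(mulmxA (invmx P) L) -PS_LL !mulmxA mulVmx // mul1mx.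
by rewrite trmx_inv mulmxK ?unitmx_tr.
Qed.

Theorem proposition2p12 (C : numClosedFieldType) (A1 A2 : 'M[C]_2) :
  sigma12 A1 A2 != 0 ->
  exists B1 B2 : 'M[C]_2,
    similar_pair A1 A2 B1 B2 /\ B1^T = B1 /\ B2^T = B2.
Proof.
move=> sigma_neq0.
pose S := (A1 *m A2 - A2 *m A1) *m mxJ C.
have [Q Qu SQ] : exists2 Q, Q \in unitmx & S = Q *m Q^T.
  apply: sym_mx22_factor; first by rewrite pnatr_eq0.
    exact/trmx_mulmxJ/mxtrace_commutator.
  by rewrite det_mulmx det_mxJ mulr1 det_commutator_mx22 oppr_eq0.
exists (invmx Q *m A1 *m Q), (invmx Q *m A2 *m Q).
split; first by exists (invmx Q); rewrite unitmx_inv invmxK.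
split; apply: trmx_conjugate_factor; rewrite // -SQ mulmxA; apply: trmx_mulmxJ.
  exact: mxtrace_mul_commutator.
by rewrite -opprB mulmxN raddfN /= mxtrace_mul_commutator oppr0.
Qed.
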